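(* Let $h$ be an admissible perturbation and $\alpha\in(0,1)$. There exists $l>0$ (depending only on $h$ and the network) such that for every $\eta>0$ there is $t_0\ge0$ with the following property: for every admissible initial condition, the solution of the dynamics with rate $\eta$ satisfies $$\tilde\nabla_\pi W(\rho(t),\pi(t))'\big(F^h(f(t))-\pi(t)\big)\le\frac{2l}{1-\alpha}\qquad\forall t\ge t_0.$$
   Context: Network: $\mathcal G=(\mathcal V,\mathcal E)$ is a finite directed graph with $\mathcal V=\{0,1,\dots,n\}$, containing no directed cycle, in which node $0$ is the unique node with no incoming link, node $n$ is the unique node with no outgoing link, there is a directed path from every node to $n$, and every link $(u,v)\in\mathcal E$ satisfies $u<v$. For $v\in\mathcal V$, $\mathcal E_v^-$ and $\mathcal E_v^+$ are the sets of links entering and leaving $v$. Each link $e$ has a flow-density function $\mu_e:[0,\infty)\to[0,\infty)$ that is continuously differentiable, strictly increasing, strictly concave, with $\mu_e(0)=0$ and $\mu_e'(0)<\infty$; its capacity is $C_e:=\lim_{\rho\to\infty}\mu_e(\rho)\in(0,+\infty]$. Put $\mathcal F_v:=\prod_{e\in\mathcal E_v^+}[0,C_e)$, $\mathcal F:=\prod_{e\in\mathcal E}[0,C_e)$, and $\mu(\rho):=(\mu_e(\rho_e))_{e\in\mathcal E}$. The delay is $T_e(f_e)=\mu_e^{-1}(f_e)/f_e$ for $0<f_e<C_e$, $T_e(0)=1/\mu_e'(0)$, $T_e(f_e)=+\infty$ for $f_e\ge C_e$; $T(f):=(T_e(f_e))_e$. $\mathcal P$ is the set of directed paths from $0$ to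 $n$, $A\in\{0,1\}^{\mathcal E\times\mathcal P}$ the link-path incidence matrix ($A_{ep}=1$ iff $e\in p$), $\mathcal S(\mathcal P)=\{\pi\in\mathbb R_+^{\mathcal P}:\sum_p\pi_p=1\}$, $\Pi:=\{\pi\in\mathcal S(\mathcal P):(A\pi)_e<C_e\ \forall e\}$, and $f^\pi:=A\pi$. The min-cut capacity $C^*:=\min\{\sum_{(u,v)\in\mathcal E:u\in\mathcal U,v\notin\mathcal U}C_{(u,v)}:\mathcal U\subseteq\mathcal V,0\in\mathcal U,n\notin\mathcal U\}$ is assumed to satisfy $C^*>1$. Perturbation: $\Phi:=I-|\mathcal P|^{-1}\mathbf 1\mathbf 1'$; interiors $\mathrm{int}$ and boundaries $\partial$ of subsets of $\mathcal S(\mathcal P)$ are relative to the hyperplane $\{x:\mathbf 1'x=1\}$. An admissible perturbation is a function $h:\Pi_h\to\mathbb R$, where $\Pi_h\subseteq\Pi$ is closed in $\mathbb R^{\mathcal P}$, convex, with nonempty interior, $h$ is strictly convex, twice differentiable on $\mathrm{int}(\Pi_h)$, and $\|\tilde\nabla h(\pi)\|\to+\infty$ as $\pi\to\partial\Pi_h$, where $\tilde\nabla h:=\Phi\nabla h$. Its perturbed best response is $F^h(f):=\arg\min_{\omega\in\Pi_h}\{\omega'A'T(f)+h(\omega)\}$ for $f\in\mathcal F$. Local decisions: for each $v\in\{0,\dots,n-1\}$ a continuously differentiable $G^v:\mathcal F_v\times\Pi\to\mathcal S(\mathcal E_v^+)$ is given such that (consistency) $(\sum_{j\in\mathcal E_v^+}f^\pi_j)\,G^v_e(f^\pi_{\mathcal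 E_v^+},\pi)=f^\pi_e$ for all $\pi\in\Pi$, $e\in\mathcal E_v^+$; and (cooperativity) $\partial G^v_j(f_{\mathcal E_v^+},\pi)/\partial f_e\ge0$ for all $\pi\in\Pi$, $f_{\mathcal E_v^+}\in\mathcal F_v$, $j\neq e\in\mathcal E_v^+$. For $f\in\mathcal F$, $\pi\in\Pi$, $e\in\mathcal E_v^+$: $H_e(f,\pi):=G^v_e(f_{\mathcal E_v^+},\pi)-f_e$ if $v=0$, and $H_e(f,\pi):=(\sum_{j\in\mathcal E_v^-}f_j)G^v_e(f_{\mathcal E_v^+},\pi)-f_e$ if $1\le v<n$. Dynamics: for $\eta>0$, $\dot\pi=\eta(F^h(f)-\pi)$, $\dot\rho=H(f,\pi)$, $f=\mu(\rho)$. An admissible initial condition is $\pi(0)\in\Pi$ with all entries positive and $\rho(0)\in(0,\infty)^{\mathcal E}$; $(\pi(t),\rho(t))_{t\ge0}$ denotes the (unique, global) solution, $f(t):=\mu(\rho(t))$, $f^\pi(t):=A\pi(t)$. Lyapunov notation: for $\pi\in\Pi$, $\rho^\pi_e:=\mu_e^{-1}(f^\pi_e)$; $\sigma_e:=\mathrm{sgn}(\rho_e-\rho^\pi_e)$ with $\mathrm{sgn}(0)=0$; $W(\rho,\pi):=\sum_{v=0}^{n-1}\alpha^v\sum_{e\in\mathcal E_v^+}|\rho_e-\rho^\pi_e|$. Its gradient in $\pi$ is taken with the convention $\frac{d}{dx}|x|=\mathrm{sgn}(x)$ for all $x$, i.e. $\partial W(\rho,\pi)/\partial\pi_p:=-\sum_{v=0}^{n-1}\alpha^v\sum_{e\in\mathcal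 E_v^+}\sigma_e A_{ep}/\mu_e'(\rho^\pi_e)$, and $\tilde\nabla_\pi W:=\Phi\nabla_\pi W$. *)

From Stdlib Require Import Reals Lra List Arith Bool ClassicalEpsilon.
Import ListNotations.
Open Scope R_scope.

(* Vectors indexed by a finite index set {0,..,m-1} are encoded as nat -> R. *)
Definition sumR (l : list nat) (f : nat -> R) : R :=
  fold_right (fun k acc => f k + acc) 0 l.
Definition rng (m : nat) : list nat := List.seq 0 m.
Definition nrmL (l : list nat) (x : nat -> R) : R := sqrt (sumR l (fun k => x k ^ 2)).
Definition vsub (x y : nat -> R) : nat -> R := fun k => x k - y k.

Definition sgn (x : R) : R :=
  if Rlt_dec 0 x then 1 else if Rlt_dec x 0 then -1 else 0.

(* extended positive reals (0,+oo]: None = +oo *)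
Definition below_cap (c : option R) (x : R) : Prop :=
  match c with None => True | Some c => x < c end.
Definition eadd (a b : option R) : option R :=
  match a, b with Some x, Some y => Some (x + y) | _, _ => None end.
Definition esum (l : list nat) (c : nat -> option R) : option R :=
  fold_right (fun k acc => eadd (c k) acc) (Some 0) l.
Definition egt1 (c : option R) : Prop :=
  match c with None => True | Some c => 1 < c end.

(* Nodes 0..nn; links are 0..nE-1, link e goes from tl e to hd e.
   mu e is the flow-density function of link e, dmu e its derivative,
   cap e its capacity C_e in (0,+oo] (None = +oo),
   paths the list of all directed paths 0 -> nn (each a list of links). *)
Record Net := mkNet {
  nn : nat; nE : nat; tl : nat -> nat; hd : nat -> nat;
  mu : nat -> R -> R; dmu : nat -> R -> R; cap : nat -> option R;
  paths : list (list nat) }.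

Section NetDefs.
Variable N : Net.

(* finite DAG, links u<v, no parallel links, node 0 the unique node without
   incoming links, node nn the unique node without outgoing links (hence
   a path from every node to nn) *)
Definition net_ok : Prop :=
  (1 <= nn N)%nat /\
  (forall e, (e < nE N)%nat -> (tl N e < hd N e)%nat /\ (hd N e <= nn N)%nat) /\
  (forall e e', (e < nE N)%nat -> (e' < nE N)%nat ->
      tl N e = tl N e' -> hd N e = hd N e' -> e = e') /\
  (forall v, (1 <= v <= nn N)%nat -> exists e, (e < nE N)%nat /\ hd N e = v) /\
  (forall v, (v < nn N)%nat -> exists e, (e < nE N)%nat /\ tl N e = v).

Definition flow_density_ok (m dm : R -> R) (c : option R) : Prop :=
  m 0 = 0 /\
  (forall x y, 0 <= x -> x < y -> m x < m y) /\
  (forall x y t, 0 <= x -> 0 <= y -> x <> y -> 0 < t < 1 ->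
       t * m x + (1 - t) * m y < m (t * x + (1 - t) * y)) /\
  (forall x, 0 < x -> derivable_pt_lim m x (dm x)) /\
  (forall eps, 0 < eps -> exists d, 0 < d /\
       forall x, 0 < x < d -> Rabs ((m x - m 0) / x - dm 0) < eps) /\
  (forall x, 0 <= x -> forall eps, 0 < eps -> exists d, 0 < d /\
       forall y, 0 <= y -> Rabs (y - x) < d -> Rabs (dm y - dm x) < eps) /\
  (match c with
   | Some cv => forall eps, 0 < eps -> exists M, forall x, M <= x -> Rabs (m x - cv) < eps
   | None => forall K, exists x, 0 <= x /\ K < m x
   end).

Definition flows_ok : Prop :=
  forall e, (e < nE N)%nat -> flow_density_ok (mu N e) (dmu N e) (cap N e).

Definition outE (v : nat) : list nat := filter (fun e => Nat.eqb (tl N e) v) (rng (nE N)).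
Definition inE (v : nat) : list nat := filter (fun e => Nat.eqb (hd N e) v) (rng (nE N)).

Definition mincut_gt1 : Prop :=
  forall U : nat -> bool, U 0%nat = true -> U (nn N) = false ->
    egt1 (esum (filter (fun e => U (tl N e) && negb (U (hd N e))) (rng (nE N))) (cap N)).

Fixpoint path_from (u : nat) (q : list nat) : Prop :=
  match q with
  | [] => u = nn N
  | e :: q' => (e < nE N)%nat /\ tl N e = u /\ path_from (hd N e) q'
  end.
Definition paths_ok : Prop :=
  NoDup (paths N) /\ forall q, In q (paths N) <-> path_from 0 q.

Definition nP : nat := length (paths N).
Definition Ainc (e p : nat) : R :=
  if existsb (Nat.eqb e) (nth p (paths N) []) then 1 else 0.
Definition fpi (pi : nat -> R) : nat -> R := fun e => sumR (rng nP) (fun p => Ainc e p * pi p).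

Definition in_simplex (pi : nat -> R) : Prop :=
  (forall k, (k < nP)%nat -> 0 <= pi k) /\ (forall k, (nP <= k)%nat -> pi k = 0) /\
  sumR (rng nP) pi = 1.
Definition in_Pi (pi : nat -> R) : Prop :=
  in_simplex pi /\ forall e, (e < nE N)%nat -> below_cap (cap N e) (fpi pi e).
Definition in_F (f : nat -> R) : Prop :=
  forall e, (e < nE N)%nat -> 0 <= f e /\ below_cap (cap N e) (f e).

Definition minv (m : R -> R) (y : R) : R :=
  epsilon (inhabits 0) (fun r => 0 <= r /\ m r = y).

(* delay, on [0, C_e) (the only region where it is used) *)
Definition Tdel (e : nat) (x : R) : R :=
  if Req_dec_T x 0 then / dmu N e 0 else minv (mu N e) x / x.

Definition cost (f omega : nat -> R) : R :=
  sumR (rng nP) (fun p => omega p * sumR (rng (nE N)) (fun e => Ainc e p * Tdel e (f e))).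

Definition Fh (Ph : (nat -> R) -> Prop) (h : (nat -> R) -> R) (f : nat -> R) : nat -> R :=
  epsilon (inhabits (fun _ => 0))
    (fun omega => Ph omega /\
       forall omega', Ph omega' -> cost f omega + h omega <= cost f omega' + h omega').

Definition nrmP (x : nat -> R) : R := nrmL (rng nP) x.
Definition dotP (x y : nat -> R) : R := sumR (rng nP) (fun k => x k * y k).
Definition in_hyp (y : nat -> R) : Prop :=
  sumR (rng nP) y = 1 /\ forall k, (nP <= k)%nat -> y k = 0.
(* tangent vectors of the hyperplane (range of Phi) *)
Definition tangent (g : nat -> R) : Prop :=
  sumR (rng nP) g = 0 /\ forall k, (nP <= k)%nat -> g k = 0.
Definition rel_int (S : (nat -> R) -> Prop) (x : nat -> R) : Prop :=
  S x /\ exists d, 0 < d /\ forall y, in_hyp y -> nrmP (vsub y x) < d -> S y.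
Definition closedP (S : (nat -> R) -> Prop) : Prop :=
  forall x, (forall k, (nP <= k)%nat -> x k = 0) ->
    (forall d, 0 < d -> exists y, S y /\ nrmP (vsub y x) < d) -> S x.
Definition convexP (S : (nat -> R) -> Prop) : Prop :=
  forall x y t, S x -> S y -> 0 <= t <= 1 -> S (fun k => t * x k + (1 - t) * y k).
(* g is the projected gradient Phi grad h(x) of h at x (along the hyperplane) *)
Definition has_tgrad (S : (nat -> R) -> Prop) (h : (nat -> R) -> R) (x g : nat -> R) : Prop :=
  tangent g /\
  forall eps, 0 < eps -> exists d, 0 < d /\ forall y, S y -> in_hyp y ->
    nrmP (vsub y x) < d -> Rabs (h y - h x - dotP g (vsub y x)) <= eps * nrmP (vsub y x).
(* the gradient map g is differentiable at x (h is twice differentiable) *)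
Definition grad_diff (S : (nat -> R) -> Prop) (g : (nat -> R) -> (nat -> R)) (x : nat -> R) : Prop :=
  exists Hs : nat -> nat -> R,
  forall eps, 0 < eps -> exists d, 0 < d /\ forall y, S y -> in_hyp y ->
    nrmP (vsub y x) < d ->
    nrmP (fun k => g y k - g x k - sumR (rng nP) (fun j => Hs k j * (y j - x j)))
      <= eps * nrmP (vsub y x).
Definition admissible (Ph : (nat -> R) -> Prop) (h : (nat -> R) -> R) : Prop :=
  (forall x, Ph x -> in_Pi x) /\ closedP Ph /\ convexP Ph /\ (exists x, rel_int Ph x) /\
  (forall x y t, Ph x -> Ph y -> (exists k, (k < nP)%nat /\ x k <> y k) -> 0 < t < 1 ->
     h (fun k => t * x k + (1 - t) * y k) < t * h x + (1 - t) * h y) /\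
  exists g : (nat -> R) -> (nat -> R),
    (forall x, rel_int Ph x -> has_tgrad Ph h x (g x)) /\
    (forall x, rel_int Ph x -> grad_diff Ph g x) /\
    (forall xb, Ph xb -> ~ rel_int Ph xb -> forall M, exists d, 0 < d /\
       forall x, rel_int Ph x -> nrmP (vsub x xb) < d -> M < nrmP (g x)).

(* G v f pi e = G^v_e(f_{E_v^+}, pi); f_{E_v^+} is encoded as the vector f
   restricted to outE v (zero elsewhere) *)
Definition restr (v : nat) (f : nat -> R) : nat -> R :=
  fun e => if Nat.eqb (tl N e) v && Nat.ltb e (nE N) then f e else 0.
Definition in_Fv (v : nat) (f : nat -> R) : Prop :=
  (forall e, In e (outE v) -> 0 <= f e /\ below_cap (cap N e) (f e)) /\
  (forall e, ~ In e (outE v) -> f e = 0).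

Definition G_ok (G : nat -> (nat -> R) -> (nat -> R) -> (nat -> R)) : Prop :=
  forall v, (v < nn N)%nat ->
  (forall f pi, in_Fv v f -> in_Pi pi ->
     (forall e, In e (outE v) -> 0 <= G v f pi e) /\ sumR (outE v) (G v f pi) = 1) /\
  (forall pi, in_Pi pi -> forall e, In e (outE v) ->
     sumR (outE v) (fpi pi) * G v (restr v (fpi pi)) pi e = fpi pi e) /\
  (exists (dGf dGp : nat -> (nat -> R) -> (nat -> R) -> nat -> R),
    (forall j, In j (outE v) -> forall f pi, in_Fv v f -> in_Pi pi ->
       forall eps, 0 < eps -> exists d, 0 < d /\ forall f' pi', in_Fv v f' -> in_Pi pi' ->
         nrmL (outE v) (vsub f' f) + nrmP (vsub pi' pi) < d ->
         Rabs (G v f' pi' j - G v f pi j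
               - sumR (outE v) (fun k => dGf j f pi k * (f' k - f k))
               - sumR (rng nP) (fun p => dGp j f pi p * (pi' p - pi p)))
         <= eps * (nrmL (outE v) (vsub f' f) + nrmP (vsub pi' pi))) /\
    (forall j, In j (outE v) -> forall f pi, in_Fv v f -> in_Pi pi ->
       forall eps, 0 < eps -> exists d, 0 < d /\ forall f' pi', in_Fv v f' -> in_Pi pi' ->
         nrmL (outE v) (vsub f' f) + nrmP (vsub pi' pi) < d ->
         (forall k, In k (outE v) -> Rabs (dGf j f' pi' k - dGf j f pi k) < eps) /\
         (forall p, (p < nP)%nat -> Rabs (dGp j f' pi' p - dGp j f pi p) < eps)) /\
    (forall f pi, in_Fv v f -> in_Pi pi -> forall j e, In j (outE v) -> In e (outE v) ->
       j <> e -> 0 <= dGf j f pi e)).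

Definition Hfield (G : nat -> (nat -> R) -> (nat -> R) -> (nat -> R))
    (f pi : nat -> R) (e : nat) : R :=
  let v := tl N e in
  if Nat.eqb v 0 then G 0%nat (restr 0 f) pi e - f e
  else sumR (inE v) f * G v (restr v f) pi e - f e.

Definition fvec (rho : nat -> R) : nat -> R := fun e => mu N e (rho e).

Definition admissible_init (pi rho : R -> (nat -> R)) : Prop :=
  in_Pi (pi 0) /\ (forall k, (k < nP)%nat -> 0 < pi 0 k) /\
  (forall e, (e < nE N)%nat -> 0 < rho 0 e).

Definition is_solution (G : nat -> (nat -> R) -> (nat -> R) -> (nat -> R))
    (Ph : (nat -> R) -> Prop) (h : (nat -> R) -> R) (eta : R)
    (pi rho : R -> (nat -> R)) : Prop :=
  (forall t, 0 <= t -> in_Pi (pi t) /\ (forall e, (e < nE N)%nat -> 0 <= rho t e) /\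
                       in_F (fvec (rho t))) /\
  (forall t, 0 < t -> forall k, (k < nP)%nat ->
     derivable_pt_lim (fun s => pi s k) t (eta * (Fh Ph h (fvec (rho t)) k - pi t k))) /\
  (forall t, 0 < t -> forall e, (e < nE N)%nat ->
     derivable_pt_lim (fun s => rho s e) t (Hfield G (fvec (rho t)) (pi t) e)) /\
  (forall k, (k < nP)%nat -> forall eps, 0 < eps -> exists d, 0 < d /\
     forall s, 0 <= s < d -> Rabs (pi s k - pi 0 k) < eps) /\
  (forall e, (e < nE N)%nat -> forall eps, 0 < eps -> exists d, 0 < d /\
     forall s, 0 <= s < d -> Rabs (rho s e - rho 0 e) < eps).

Definition rhopi (pi : nat -> R) (e : nat) : R := minv (mu N e) (fpi pi e).
(* dW/dpi_p *)
Definition gradW (alpha : R) (rho pi : nat -> R) (p : nat) : R :=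
  - sumR (rng (nn N)) (fun v => alpha ^ v *
      sumR (outE v) (fun e => sgn (rho e - rhopi pi e) * Ainc e p / dmu N e (rhopi pi e))).
Definition Phi (x : nat -> R) : nat -> R :=
  fun p => x p - / INR nP * sumR (rng nP) x.

End NetDefs.

From Pilot Require Import Defs.
From Stdlib Require Import Reals Lra Lia List ClassicalEpsilon Classical
  FunctionalExtensionality Ranalysis5 Rtopology ZArith.
Import ListNotations.
Open Scope R_scope.

(* The best response F^h(f) lies in Pi_h, a compact subset of Pi, so the link flows it
   induces stay below some B_e < C_e.  Along the dynamics each link flow (A pi)_e relaxes
   towards such values at rate eta, hence after a time t0 depending on eta it stays below a
   fixed tau_e in (B_e, C_e).  On [0, tau_e] the slope mu_e' o mu_e^-1 is bounded below by
   some d_e > 0 by concavity, so every entry of grad_pi W is at most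
   (sum_e 1/d_e) (sum_v alpha^v) <= l / (1 - alpha); as F^h(f) - pi sums to zero and has
   l1-norm at most 2, the projection Phi is harmless and the bound follows.
   That F^h(f) is attained at all uses that h is convex on the compact set Pi_h with a
   gradient blowing up at its relative boundary: a cluster point of a minimizing sequence
   satisfies the first-order optimality inequality against interior points, which bounds
   the gradient along a segment into it and so keeps it off the boundary. *)

Lemma in_rng k n : In k (rng n) <-> (k < n)%nat.
Proof. unfold rng; rewrite in_seq; lia. Qed.

Lemma rng_S n : rng (S n) = rng n ++ [n].
Proof. unfold rng; now rewrite seq_S. Qed.

Lemma sumR_app l1 l2 f : sumR (l1 ++ l2) f = sumR l1 f + sumR l2 f.
Proof. induction l1 as [|a l1 IH]; simpl; [lra|]. rewrite IH; lra. Qed.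

Lemma sumR_ext l f g : (forall k, In k l -> f k = g k) -> sumR l f = sumR l g.
Proof.
  induction l as [|a l IH]; intros Hfg; simpl; auto.
  rewrite (Hfg a (or_introl eq_refl)), IH; auto.
  intros k Hk; apply Hfg; now right.
Qed.

Lemma sumR_plus l f g : sumR l (fun k => f k + g k) = sumR l f + sumR l g.
Proof. induction l as [|a l IH]; simpl; [lra|]. rewrite IH; lra. Qed.

Lemma sumR_minus l f g : sumR l (fun k => f k - g k) = sumR l f - sumR l g.
Proof. induction l as [|a l IH]; simpl; [lra|]. rewrite IH; lra. Qed.

Lemma sumR_scal l c f : sumR l (fun k => c * f k) = c * sumR l f.
Proof. induction l as [|a l IH]; simpl; [lra|]. rewrite IH; lra. Qed.

Lemma sumR_const l c : sumR l (fun _ => c) = INR (length l) * c.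
Proof.
  induction l as [|a l IH]; simpl length; [simpl; lra|].
  rewrite S_INR; simpl; rewrite IH; lra.
Qed.

Lemma sumR_const_rng n c : sumR (rng n) (fun _ => c) = INR n * c.
Proof. now rewrite sumR_const; unfold rng; rewrite length_seq. Qed.

Lemma sumR_le l f g : (forall k, In k l -> f k <= g k) -> sumR l f <= sumR l g.
Proof.
  induction l as [|a l IH]; intros Hfg; simpl; [lra|].
  pose proof (Hfg a (or_introl eq_refl)).
  pose proof (IH (fun k Hk => Hfg k (or_intror Hk))); lra.
Qed.

Lemma sumR_nonneg l f : (forall k, In k l -> 0 <= f k) -> 0 <= sumR l f.
Proof.
  intros Hf. replace 0 with (sumR l (fun _ => 0)) by (rewrite sumR_const; lra).
  now apply sumR_le.
Qed.

Lemma sumR_zero l f : (forall k, In k l -> f k = 0) -> sumR l f = 0.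
Proof. intros Hf. rewrite (sumR_ext l f (fun _ => 0)), sumR_const; auto; lra. Qed.

Lemma sumR_abs l f : Rabs (sumR l f) <= sumR l (fun k => Rabs (f k)).
Proof.
  induction l as [|a l IH]; simpl; [rewrite Rabs_R0; lra|].
  eapply Rle_trans; [apply Rabs_triang|lra].
Qed.

Lemma sumR_term_le l f k :
  (forall j, In j l -> 0 <= f j) -> In k l -> f k <= sumR l f.
Proof.
  induction l as [|a l IH]; simpl; intros Hf Hk; [contradiction|].
  pose proof (Hf a (or_introl eq_refl)).
  pose proof (sumR_nonneg l f (fun j Hj => Hf j (or_intror Hj))).
  destruct Hk as [<-|Hk]; [lra|].
  pose proof (IH (fun j Hj => Hf j (or_intror Hj)) Hk); lra.
Qed.

Lemma sumR_filter_le (P : nat -> bool) l f :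
  (forall k, In k l -> 0 <= f k) -> sumR (filter P l) f <= sumR l f.
Proof.
  induction l as [|a l IH]; simpl; intros Hf; [lra|].
  pose proof (IH (fun k Hk => Hf k (or_intror Hk))).
  pose proof (Hf a (or_introl eq_refl)).
  destruct (P a); simpl; lra.
Qed.

Lemma sumR_indicator n i a : (i < n)%nat ->
  sumR (rng n) (fun k => a k * (if Nat.eqb k i then 1 else 0)) = a i.
Proof.
  induction n as [|n IH]; intros Hi; [lia|].
  rewrite rng_S, sumR_app; simpl.
  destruct (Nat.eqb_spec n i) as [->|Hni].
  - rewrite sumR_zero; [lra|].
    intros k Hk; apply in_rng in Hk.
    destruct (Nat.eqb_spec k i); [lia|ring].
  - rewrite IH by lia; lra.
Qed.

Lemma sumR_derivable l (F : R -> nat -> R) (D : nat -> R) t :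
  (forall k, In k l -> derivable_pt_lim (fun s => F s k) t (D k)) ->
  derivable_pt_lim (fun s => sumR l (F s)) t (sumR l D).
Proof.
  induction l as [|a l IH]; simpl; intros HF.
  - apply derivable_pt_lim_const.
  - apply (derivable_pt_lim_plus (fun s => F s a) (fun s => sumR l (F s))); auto.
Qed.

Lemma sumR_cv l (F : nat -> nat -> R) (L : nat -> R) :
  (forall k, In k l -> Un_cv (fun n => F n k) (L k)) ->
  Un_cv (fun n => sumR l (F n)) (sumR l L).
Proof.
  induction l as [|a l IH]; simpl; intros HF.
  - intros e He; exists 0%nat; intros; unfold Rdist; rewrite Rminus_diag, Rabs_R0; auto.
  - apply (CV_plus (fun n => F n a) (fun n => sumR l (F n))); auto.
Qed.

Lemma nrmL_nonneg l v : 0 <= nrmL l v.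
Proof. apply sqrt_pos. Qed.

Lemma nrmL_le_l1 l v : nrmL l v <= sumR l (fun k => Rabs (v k)).
Proof.
  assert (Hsq : sumR l (fun k => v k ^ 2) <= sumR l (fun k => Rabs (v k)) ^ 2).
  { induction l as [|a l IH]; simpl in *; [lra|].
    pose proof (sumR_nonneg l (fun k => Rabs (v k)) (fun k _ => Rabs_pos (v k))).
    pose proof (Rabs_pos (v a)).
    pose proof (pow2_abs (v a)); nra. }
  unfold nrmL.
  rewrite <- (sqrt_pow2 (sumR l (fun k => Rabs (v k))))
    by (apply sumR_nonneg; intros; apply Rabs_pos).
  now apply sqrt_le_1_alt.
Qed.

Lemma nrmL_ext l v w : (forall k, In k l -> v k = w k) -> nrmL l v = nrmL l w.
Proof. intros Hvw; unfold nrmL; f_equal; apply sumR_ext; intros; now rewrite Hvw. Qed.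

Lemma nrmL_scal l t v : nrmL l (fun k => t * v k) = Rabs t * nrmL l v.
Proof.
  unfold nrmL.
  replace (sumR l (fun k => (t * v k) ^ 2)) with (t ^ 2 * sumR l (fun k => v k ^ 2))
    by (rewrite <- sumR_scal; apply sumR_ext; intros; ring).
  rewrite sqrt_mult_alt by (apply pow2_ge_0).
  now rewrite <- (pow2_abs t), sqrt_pow2 by apply Rabs_pos.
Qed.

Lemma Rabs_le_between a b : Rabs a <= b -> - b <= a <= b.
Proof. intros H. pose proof (Rle_abs a); pose proof (Rle_abs (- a)); rewrite Rabs_Ropp in *; lra. Qed.

Lemma le_div_of_mul_le a b c : 0 < c -> a * c <= b -> a <= b / c.
Proof.
  intros Hc Hab. replace a with (a * c / c) by (field; lra).
  unfold Rdiv; apply Rmult_le_compat_r; [left; apply Rinv_0_lt_compat|]; lra.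
Qed.

Lemma div_le_of_le_mul a b c : 0 < c -> a <= b * c -> a / c <= b.
Proof.
  intros Hc Hab. replace b with (b * c / c) by (field; lra).
  unfold Rdiv; apply Rmult_le_compat_r; [left; apply Rinv_0_lt_compat|]; lra.
Qed.

Lemma le_of_le_add_eps_mul A B C :
  0 <= B -> (forall eps, 0 < eps -> A - eps * B <= C) -> A <= C.
Proof.
  intros HB H. destruct (Rle_dec A C) as [|HAC]; auto.
  set (eps := (A - C) / (2 * (B + 1))).
  assert (Heps : 0 < eps) by (apply Rdiv_lt_0_compat; lra).
  assert (eps * B <= (A - C) / 2).
  { apply le_div_of_mul_le; [lra|]. unfold eps.
    replace ((A - C) / (2 * (B + 1)) * B * 2) with ((A - C) * (B / (B + 1))) by (field; lra).
    rewrite <- (Rmult_1_r (A - C)) at 2. apply Rmult_le_compat_l; [lra|].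
    apply div_le_of_le_mul; lra. }
  specialize (H eps Heps); lra.
Qed.

Lemma small_factor_mul_lt d v a : 0 < d -> 0 <= v -> 0 < a ->
  0 < Rmin a (d / (2 * (v + 1))) /\ Rmin a (d / (2 * (v + 1))) * v < d.
Proof.
  intros Hd Hv Ha. split; [apply Rmin_pos; [lra|apply Rdiv_lt_0_compat; lra]|].
  apply (Rle_lt_trans _ (d / (2 * (v + 1)) * v)).
  - apply Rmult_le_compat_r; [auto|apply Rmin_r].
  - apply (Rmult_lt_reg_r (2 * (v + 1))); [lra|].
    replace (d / (2 * (v + 1)) * v * (2 * (v + 1))) with (d * v) by (field; lra). nra.
Qed.

Lemma cv_inv_INR_S : Un_cv (fun n => / INR (S n)) 0.
Proof.
  intros e He. destruct (archimed (/ e)) as [Ha _].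
  assert (0 <= IZR (up (/ e))) by (pose proof (Rinv_0_lt_compat e He); lra).
  exists (Z.to_nat (up (/ e))). intros n Hn. unfold Rdist. rewrite Rminus_0_r.
  rewrite Rabs_right by (left; apply Rinv_0_lt_compat, lt_0_INR; lia).
  rewrite <- (Rinv_inv e). apply Rinv_lt_contravar.
  - apply Rmult_lt_0_compat; [now apply Rinv_0_lt_compat|apply lt_0_INR; lia].
  - apply (Rlt_le_trans _ (IZR (up (/ e)))); auto.
    rewrite <- (Z2Nat.id (up (/ e))) by (apply le_IZR; auto).
    rewrite <- INR_IZR_INZ. apply le_INR; lia.
Qed.

Lemma inv_INR_S_le m n : (m <= n)%nat -> / INR (S n) <= / INR (S m).
Proof. intros Hmn. apply Rinv_le_contravar; [apply lt_0_INR; lia|apply le_INR; lia]. Qed.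

Lemma cv0_plus u v : Un_cv u 0 -> Un_cv v 0 -> Un_cv (fun n => u n + v n) 0.
Proof. intros. replace 0 with (0 + 0) by ring. now apply CV_plus. Qed.

Lemma cv0_scal c u : Un_cv u 0 -> Un_cv (fun n => c * u n) 0.
Proof.
  intros Hu. replace 0 with (c * 0) by ring. apply CV_mult; auto.
  intros e He; exists 0%nat; intros; unfold Rdist; rewrite Rminus_diag, Rabs_R0; auto.
Qed.

Lemma le_of_le_add_cv0 a b (u : nat -> R) : (forall n, a <= b + u n) -> Un_cv u 0 -> a <= b.
Proof.
  intros H Hu. destruct (Rle_dec a b) as [|Hab]; auto. exfalso.
  destruct (Hu (a - b) ltac:(lra)) as [n0 Hn0].
  specialize (Hn0 n0 (Nat.le_refl _)); specialize (H n0).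
  unfold Rdist in Hn0; rewrite Rminus_0_r in Hn0.
  pose proof (Rle_abs (u n0)); lra.
Qed.

Definition strict_incr (psi : nat -> nat) : Prop := forall n, (psi n < psi (S n))%nat.

Lemma strict_incr_ge psi : strict_incr psi -> forall n, (n <= psi n)%nat.
Proof. intros H n; induction n; [lia|]. specialize (H n); lia. Qed.

Lemma strict_incr_le psi : strict_incr psi -> forall n m, (n <= m)%nat -> (psi n <= psi m)%nat.
Proof. intros H n m Hnm; induction Hnm; [lia|]. specialize (H m); lia. Qed.

Lemma strict_incr_comp phi psi :
  strict_incr phi -> strict_incr psi -> strict_incr (fun n => phi (psi n)).
Proof.
  intros Hphi Hpsi n. pose proof (Hpsi n).
  pose proof (strict_incr_le phi Hphi (S (psi n)) (psi (S n)) ltac:(lia)).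
  pose proof (Hphi (psi n)); lia.
Qed.

Lemma Un_cv_subseq (u : nat -> R) l psi :
  strict_incr psi -> Un_cv u l -> Un_cv (fun n => u (psi n)) l.
Proof.
  intros Hp Hu e He. destruct (Hu e He) as [n0 Hn0]. exists n0. intros n Hn.
  apply Hn0. pose proof (strict_incr_ge psi Hp n); lia.
Qed.

Lemma unit_interval_subseq_cv (u : nat -> R) : (forall n, 0 <= u n <= 1) ->
  exists psi l, strict_incr psi /\ Un_cv (fun n => u (psi n)) l.
Proof.
  intros Hu.
  destruct (Bolzano_Weierstrass u (fun c => 0 <= c <= 1) (compact_P3 0 1) Hu) as [l Hl].
  set (close := fun N k p => (N <= p)%nat /\ Rabs (u p - l) < / INR (S k)).
  assert (Hsel : forall N k, exists p, close N k p).
  { intros N k. assert (Hk : 0 < / INR (S k)) by (apply Rinv_0_lt_compat, lt_0_INR; lia).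
    destruct (Hl (fun y => Rabs (y - l) < / INR (S k)) N) as [p [Hp Hp']].
    - exists (mkposreal _ Hk). intros y Hy. exact Hy.
    - exists p; split; auto. }
  set (sel := fun N k => epsilon (inhabits 0%nat) (close N k)).
  assert (Hs : forall N k, close N k (sel N k)) by (intros; apply epsilon_spec, Hsel).
  set (psi := fix psi n :=
    match n with 0 => sel 0%nat 0%nat | S n' => sel (S (psi n')) (S n') end).
  exists psi, l. split.
  - intros n. simpl. destruct (Hs (S (psi n)) (S n)); lia.
  - assert (Hb : forall n, Rabs (u (psi n) - l) < / INR (S n))
      by (intros [|n]; apply Hs).
    intros e He. destruct (cv_inv_INR_S e He) as [n0 Hn0]. exists n0. intros n Hn.
    specialize (Hn0 n Hn). unfold Rdist in *. rewrite Rminus_0_r in Hn0.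
    specialize (Hb n). pose proof (Rle_abs (/ INR (S n))); lra.
Qed.

Lemma unit_cube_subseq_cv (x : nat -> nat -> R) : (forall n k, 0 <= x n k <= 1) ->
  forall m, exists phi (L : nat -> R), strict_incr phi /\
    forall k, (k < m)%nat -> Un_cv (fun n => x (phi n) k) (L k).
Proof.
  intros Hx m. induction m as [|m [phi [L [Hphi HL]]]].
  - exists (fun n => n), (fun _ => 0). split; [intros n; lia|intros; lia].
  - destruct (unit_interval_subseq_cv (fun n => x (phi n) m) (fun n => Hx _ _))
      as [psi [l [Hpsi Hl]]].
    exists (fun n => phi (psi n)), (fun k => if Nat.eqb k m then l else L k). split.
    + now apply strict_incr_comp.
    + intros k Hk. destruct (Nat.eqb_spec k m) as [->|Hkm]; auto.
      apply (Un_cv_subseq (fun n => x (phi n) k)); auto. apply HL; lia.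
Qed.

Section FlowDensity.
Variables (m dm : R -> R) (c : option R).
Hypothesis Hm : flow_density_ok m dm c.

Lemma fd_le x y : 0 <= x -> x <= y -> m x <= m y.
Proof.
  pose proof Hm as [_ [Hincr _]]. intros Hx Hxy.
  destruct (Req_dec x y) as [->|]; [lra|]. left; apply Hincr; lra.
Qed.

(* Strict concavity, with the convex combination written as x + s. *)
Lemma fd_chord x y s : 0 <= x -> x < y -> 0 < s < y - x ->
  s / (y - x) * (m y - m x) <= m (x + s) - m x.
Proof.
  pose proof Hm as [_ [_ [Hconc _]]]. intros Hx Hxy Hs.
  assert (Hq : 0 < s / (y - x) < 1).
  { split; [apply Rdiv_lt_0_compat; lra|].
    apply (Rmult_lt_reg_r (y - x)); [lra|].
    unfold Rdiv; rewrite Rmult_assoc, Rinv_l; lra. }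
  specialize (Hconc x y (1 - s / (y - x)) Hx ltac:(lra) ltac:(lra) ltac:(lra)).
  replace ((1 - s / (y - x)) * x + (1 - (1 - s / (y - x))) * y) with (x + s) in Hconc
    by (field; lra).
  lra.
Qed.

Lemma fd_secant_le_deriv x y : 0 <= x -> x < y -> (m y - m x) / (y - x) <= dm x.
Proof.
  intros Hx Hxy. set (S := (m y - m x) / (y - x)).
  destruct (Rle_dec S (dm x)) as [|Hn]; auto. exfalso.
  assert (He : 0 < S - dm x) by lra.
  assert (Hquot : forall s, 0 < s < y - x -> S <= (m (x + s) - m x) / s).
  { intros s Hs. apply le_div_of_mul_le; [lra|].
    pose proof (fd_chord x y s Hx Hxy Hs).
    unfold S; replace ((m y - m x) / (y - x) * s) with (s / (y - x) * (m y - m x))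
      by (unfold Rdiv; ring).
    lra. }
  assert (Hnear : exists d, 0 < d /\ forall s, 0 < s < d ->
            Rabs ((m (x + s) - m x) / s - dm x) < S - dm x).
  { destruct (Req_dec x 0) as [->|Hx0].
    - pose proof Hm as [_ [_ [_ [_ [Hr _]]]]].
      destruct (Hr _ He) as [d [Hd Hd']]. exists d; split; auto.
      intros s Hs. rewrite Rplus_0_l. now apply Hd'.
    - pose proof Hm as [_ [_ [_ [Hd _]]]].
      destruct (Hd x ltac:(lra) _ He) as [d Hd']. exists d; split; [apply cond_pos|].
      intros s Hs. apply Hd'; [lra|rewrite Rabs_right; lra]. }
  destruct Hnear as [d [Hd Hd']].
  set (s := Rmin d (y - x) / 2).
  assert (0 < Rmin d (y - x)) by (apply Rmin_pos; lra).
  pose proof (Rmin_l d (y - x)); pose proof (Rmin_r d (y - x)).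
  specialize (Hd' s ltac:(unfold s; lra)). specialize (Hquot s ltac:(unfold s; lra)).
  apply Rabs_def2 in Hd'; lra.
Qed.

Lemma fd_continuous x : 0 < x -> continuity_pt m x.
Proof.
  intros Hx. pose proof Hm as [_ [_ [_ [Hd _]]]].
  apply derivable_continuous_pt. exists (dm x). now apply Hd.
Qed.

Lemma fd_small_value y : 0 < y -> exists a, 0 < a /\ m a < y.
Proof.
  intros Hy. pose proof Hm as [Hm0 [_ [_ [_ [Hr _]]]]].
  destruct (Hr 1 ltac:(lra)) as [d [Hd Hd']].
  set (K := Rabs (dm 0) + 1).
  assert (HK : 0 < K) by (unfold K; pose proof (Rabs_pos (dm 0)); lra).
  pose proof (Rmin_l (d / 2) (y / (2 * K))) as Ha1.
  pose proof (Rmin_r (d / 2) (y / (2 * K))) as Ha2.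
  set (a := Rmin (d / 2) (y / (2 * K))) in *.
  assert (Ha : 0 < a) by (apply Rmin_pos; [lra|apply Rdiv_lt_0_compat; lra]).
  exists a; split; auto.
  specialize (Hd' a ltac:(lra)). rewrite Hm0 in Hd'.
  apply Rabs_def2 in Hd' as [Hd' _].
  assert (m a / a < K) by (unfold K; pose proof (Rle_abs (dm 0)); lra).
  assert (m a < a * K).
  { apply (Rmult_lt_reg_r (/ a)); [now apply Rinv_0_lt_compat|].
    now replace (a * K * / a) with K by (field; lra). }
  assert (a * K <= y / 2).
  { apply (Rmult_le_compat_r K) in Ha2; [|lra].
    now replace (y / (2 * K) * K) with (y / 2) in Ha2 by (field; lra). }
  lra.
Qed.

Lemma fd_exceeds tau : below_cap c tau -> exists R, 0 < R /\ tau < m R.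
Proof.
  intros Hb. destruct Hm as [_ [Hincr [_ [_ [_ [_ Hc]]]]]]. destruct c as [cv|].
  - simpl in Hb. destruct (Hc (cv - tau) ltac:(lra)) as [M HM].
    exists (Rmax M 1). split; [pose proof (Rmax_r M 1); lra|].
    specialize (HM (Rmax M 1) (Rmax_l M 1)). apply Rabs_def2 in HM; lra.
  - destruct (Hc tau) as [x [Hx Hx']]. exists (Rmax x 1).
    split; [pose proof (Rmax_r x 1); lra|].
    destruct (Rle_lt_or_eq_dec x (Rmax x 1) (Rmax_l x 1)) as [Hlt|<-]; auto.
    specialize (Hincr x (Rmax x 1) Hx Hlt); lra.
Qed.

Lemma fd_onto y : 0 <= y -> below_cap c y -> exists r, 0 <= r /\ m r = y.
Proof.
  intros Hy Hb. destruct (Req_dec y 0) as [->|Hy0].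
  { exists 0; split; [lra|apply Hm]. }
  destruct (fd_small_value y ltac:(lra)) as [a [Ha Hma]].
  destruct (fd_exceeds y Hb) as [R0 [HR HmR]].
  set (X := Rmax R0 (a + 1)).
  assert (HX : y < m X) by (pose proof (fd_le R0 X ltac:(lra) (Rmax_l _ _)); lra).
  assert (a < X) by (pose proof (Rmax_r R0 (a + 1)); unfold X; lra).
  destruct (IVT_interv (fun z => m z - y) a X) as [z [Hz Hz']]; auto.
  - intros b Hb'. apply continuity_pt_minus; [apply fd_continuous; lra|apply continuity_pt_const].
    intros u v; auto.
  - simpl; lra.
  - simpl; lra.
  - exists z; split; [lra|]. simpl in Hz'; lra.
Qed.

Lemma minv_spec y : 0 <= y -> below_cap c y -> 0 <= minv m y /\ m (minv m y) = y.
Proof. intros. apply (epsilon_spec (inhabits 0) (fun r => 0 <= r /\ m r = y)). now apply fd_onto. Qed.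

(* With [tau < m R] and [r := minv m y < R], concavity gives
   [dm r >= (m (R + 1) - m r) / (R + 1 - r) >= (m (R + 1) - m R) / (R + 1)]. *)
Lemma dmu_minv_lower_bound tau : below_cap c tau -> exists d, 0 < d /\
  forall y, 0 <= y -> y <= tau -> d <= dm (minv m y).
Proof.
  intros Hb. destruct (fd_exceeds tau Hb) as [R [HR HmR]].
  assert (HR1 : m R < m (R + 1)) by (apply Hm; lra).
  exists ((m (R + 1) - m R) / (R + 1)). split; [apply Rdiv_lt_0_compat; lra|].
  intros y Hy Hyt.
  assert (Hby : below_cap c y) by (destruct c; simpl in *; auto; lra).
  destruct (minv_spec y Hy Hby) as [Hr Hmr]. set (r := minv m y) in *.
  assert (Hrr : r < R).
  { destruct (Rlt_le_dec r R) as [|HRr]; auto. pose proof (fd_le R r ltac:(lra) HRr); lra. }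
  pose proof (fd_secant_le_deriv r (R + 1) Hr ltac:(lra)).
  assert (m r <= m R) by (apply fd_le; lra).
  apply (Rle_trans _ ((m (R + 1) - m r) / (R + 1))).
  - unfold Rdiv; apply Rmult_le_compat_r; [left; apply Rinv_0_lt_compat|]; lra.
  - eapply Rle_trans; [|eassumption]. unfold Rdiv; apply Rmult_le_compat_l; [lra|].
    apply Rinv_le_contravar; lra.
Qed.

End FlowDensity.

Section Simplex.
Variable N : Net.

Lemma simplex_coord x : in_simplex N x -> forall k, 0 <= x k <= 1.
Proof.
  intros [Hpos [Hout Hsum]] k. destruct (lt_dec k (nP N)) as [Hk|Hk].
  - split; auto. rewrite <- Hsum. apply sumR_term_le; [|now apply in_rng].
    intros j Hj; apply Hpos, in_rng, Hj.
  - rewrite Hout; [lra|lia].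
Qed.

Lemma simplex_hyp x : in_simplex N x -> in_hyp N x.
Proof. intros [_ [Hout Hsum]]; split; auto. Qed.

Lemma simplex_dist_l1 x y : in_simplex N x -> in_simplex N y ->
  sumR (rng (nP N)) (fun k => Rabs (x k - y k)) <= 2.
Proof.
  intros Hx Hy.
  apply (Rle_trans _ (sumR (rng (nP N)) (fun k => x k + y k))).
  - apply sumR_le; intros k _.
    pose proof (simplex_coord x Hx k); pose proof (simplex_coord y Hy k).
    apply Rabs_le; lra.
  - rewrite sumR_plus. destruct Hx as [_ [_ ->]], Hy as [_ [_ ->]]; lra.
Qed.

Lemma dotP_plus a b v : dotP N (fun k => a k + b k) v = dotP N a v + dotP N b v.
Proof. unfold dotP. rewrite <- sumR_plus. apply sumR_ext; intros; ring. Qed.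

Lemma dotP_abs_le a v : Rabs (dotP N a v) <=
  sumR (rng (nP N)) (fun k => Rabs (a k)) * sumR (rng (nP N)) (fun k => Rabs (v k)).
Proof.
  eapply Rle_trans; [apply sumR_abs|]. rewrite <- sumR_scal.
  apply sumR_le; intros k Hk. rewrite Rabs_mult.
  apply Rmult_le_compat_r; [apply Rabs_pos|].
  apply (sumR_term_le _ (fun k => Rabs (a k))); auto. intros; apply Rabs_pos.
Qed.

Lemma in_hyp_comb x y t : in_hyp N x -> in_hyp N y ->
  in_hyp N (fun k => t * y k + (1 - t) * x k).
Proof.
  intros [Hx1 Hx2] [Hy1 Hy2]. split.
  - rewrite sumR_plus, !sumR_scal, Hx1, Hy1; ring.
  - intros k Hk. rewrite Hx2, Hy2; auto; ring.
Qed.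

Lemma nrmP_comb_sub x y t :
  nrmP N (vsub (fun k => t * y k + (1 - t) * x k) x) = Rabs t * nrmP N (vsub y x).
Proof. unfold nrmP. rewrite <- nrmL_scal. apply nrmL_ext; intros; unfold vsub; ring. Qed.

Definition ev (i k : nat) : R := if Nat.eqb k i then 1 else 0.

Lemma dotP_ev a i j s : (i < nP N)%nat -> (j < nP N)%nat ->
  dotP N a (fun k => s * (ev i k - ev j k)) = s * (a i - a j).
Proof.
  intros Hi Hj. unfold dotP.
  rewrite <- (sumR_indicator (nP N) i a Hi), <- (sumR_indicator (nP N) j a Hj).
  rewrite <- sumR_minus, <- sumR_scal. apply sumR_ext; intros; unfold ev; ring.
Qed.

(* A tangent vector averages to zero, so each entry is an average of differences. *)
Lemma tangent_abs_le_of_spread g T : tangent N g ->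
  (forall i j, (i < nP N)%nat -> (j < nP N)%nat -> g i - g j <= T) ->
  forall k, (k < nP N)%nat -> Rabs (g k) <= T.
Proof.
  intros [Hsum _] Hspread k Hk.
  assert (HnP : 0 < INR (nP N)) by (apply lt_0_INR; lia).
  assert (Hk_avg : INR (nP N) * g k = sumR (rng (nP N)) (fun j => g k - g j)).
  { rewrite sumR_minus, Hsum, sumR_const_rng; ring. }
  assert (Hk_avg' : INR (nP N) * - g k = sumR (rng (nP N)) (fun j => g j - g k)).
  { rewrite sumR_minus, Hsum, sumR_const_rng; ring. }
  assert (Hup : INR (nP N) * g k <= INR (nP N) * T).
  { rewrite Hk_avg, <- sumR_const_rng.
    apply sumR_le; intros j Hj; apply Hspread, in_rng; auto. }
  assert (Hlow : INR (nP N) * - g k <= INR (nP N) * T).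
  { rewrite Hk_avg', <- sumR_const_rng.
    apply sumR_le; intros j Hj; apply Hspread; auto; apply in_rng; auto. }
  apply Rmult_le_reg_l in Hup; auto. apply Rmult_le_reg_l in Hlow; auto.
  apply Rabs_le; lra.
Qed.

End Simplex.

Section Perturbation.
Variables (N : Net) (Ph : (nat -> R) -> Prop) (h : (nat -> R) -> R).
Hypothesis Had : admissible N Ph h.

Lemma Ph_simplex x : Ph x -> in_simplex N x.
Proof. intros; now apply Had. Qed.

Lemma Ph_hyp x : Ph x -> in_hyp N x.
Proof. intros; now apply simplex_hyp, Ph_simplex. Qed.

Lemma Ph_coord x : Ph x -> forall k, 0 <= x k <= 1.
Proof. intros; now apply (simplex_coord N), Ph_simplex. Qed.

(* Strict convexity only constrains pairs that differ on some path. *)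
Lemma h_convex x y t : Ph x -> Ph y -> 0 < t < 1 ->
  h (fun k => t * x k + (1 - t) * y k) <= t * h x + (1 - t) * h y.
Proof.
  destruct Had as [_ [_ [_ [_ [Hstrict _]]]]]. intros Hx Hy Ht.
  destruct (classic (exists k, (k < nP N)%nat /\ x k <> y k)) as [Hne|Heq].
  { left; now apply Hstrict. }
  replace y with x.
  { replace (fun k => t * x k + (1 - t) * x k) with x
      by (apply functional_extensionality; intros; ring). lra. }
  apply functional_extensionality; intros k. destruct (lt_dec k (nP N)) as [Hk|Hk].
  - apply NNPP; intros Hxy; eauto.
  - destruct (Ph_hyp x Hx) as [_ Hx0], (Ph_hyp y Hy) as [_ Hy0].
    rewrite Hx0, Hy0; auto; lia.
Qed.

Lemma tgrad_subgradient x gx y : Ph x -> has_tgrad N Ph h x gx -> Ph y ->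
  h x + dotP N gx (vsub y x) <= h y.
Proof.
  intros Hx [_ Hg] Hy. pose proof Had as [_ [_ [Hcv _]]].
  set (nv := nrmP N (vsub y x)).
  assert (Hnv : 0 <= nv) by apply nrmL_nonneg.
  enough (dotP N gx (vsub y x) <= h y - h x) by lra.
  apply (le_of_le_add_eps_mul _ nv); auto. intros eps He.
  destruct (Hg eps He) as [d [Hd Hd']].
  destruct (small_factor_mul_lt d nv (1 / 2) Hd Hnv ltac:(lra)) as [Ht0 Htnv].
  pose proof (Rmin_l (1 / 2) (d / (2 * (nv + 1)))).
  set (t := Rmin (1 / 2) (d / (2 * (nv + 1)))) in *.
  assert (Ht : 0 < t < 1) by lra.
  specialize (Hd' (fun k => t * y k + (1 - t) * x k) (Hcv y x t Hy Hx ltac:(lra))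
                (in_hyp_comb N x y t (Ph_hyp x Hx) (Ph_hyp y Hy))).
  rewrite nrmP_comb_sub, Rabs_right in Hd' by lra. fold nv in Hd'.
  specialize (Hd' Htnv).
  assert (Hdot : dotP N gx (vsub (fun k => t * y k + (1 - t) * x k) x)
                 = t * dotP N gx (vsub y x)).
  { unfold dotP. rewrite <- sumR_scal. apply sumR_ext; intros; unfold vsub; ring. }
  rewrite Hdot in Hd'. apply Rabs_le_between in Hd'.
  pose proof (h_convex y x t Hy Hx Ht) as Hconv.
  assert (Hmul : t * (dotP N gx (vsub y x) - eps * nv) <= t * (h y - h x)) by nra.
  apply Rmult_le_reg_l in Hmul; lra.
Qed.

Lemma Ph_cluster_point (om : nat -> nat -> R) : (forall n, Ph (om n)) ->
  exists psi ws, strict_incr psi /\ Ph ws /\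
    Un_cv (fun n => sumR (rng (nP N)) (fun k => Rabs (om (psi n) k - ws k))) 0.
Proof.
  intros Hom. pose proof Had as [_ [Hcl _]].
  destruct (unit_cube_subseq_cv om (fun n => Ph_coord _ (Hom n)) (nP N))
    as [psi [L [Hpsi HL]]].
  set (ws := fun k => if Nat.ltb k (nP N) then L k else 0).
  set (D := fun n => sumR (rng (nP N)) (fun k => Rabs (om (psi n) k - ws k))).
  assert (HD : Un_cv D 0).
  { unfold D. rewrite <- (sumR_zero (rng (nP N)) (fun _ => 0)) by auto.
    apply sumR_cv. intros k Hk. apply in_rng in Hk. intros e He.
    destruct (HL k Hk e He) as [n0 Hn0]. exists n0. intros n Hn.
    specialize (Hn0 n Hn). unfold Rdist in *. rewrite Rminus_0_r, Rabs_Rabsolu.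
    unfold ws. destruct (Nat.ltb_spec k (nP N)); [auto|lia]. }
  exists psi, ws. repeat split; auto.
  apply Hcl.
  - intros k Hk. unfold ws. destruct (Nat.ltb_spec k (nP N)); [lia|auto].
  - intros d Hd. destruct (HD d Hd) as [n0 Hn0]. exists (om (psi n0)). split; [apply Hom|].
    specialize (Hn0 n0 (Nat.le_refl _)). unfold Rdist in Hn0; rewrite Rminus_0_r in Hn0.
    eapply Rle_lt_trans; [apply nrmL_le_l1|]. eapply Rle_lt_trans; [apply Rle_abs|exact Hn0].
Qed.

Lemma rel_int_comb x0 w mu : rel_int N Ph x0 -> Ph w -> 0 < mu <= 1 ->
  rel_int N Ph (fun k => mu * x0 k + (1 - mu) * w k).
Proof.
  intros [Hx0 [d0 [Hd0 Hball]]] Hw Hmu. pose proof Had as [_ [_ [Hcv _]]].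
  split; [apply Hcv; auto; lra|].
  exists (mu * d0). split; [nra|]. intros y Hy Hn.
  set (w' := fun k => (y k - (1 - mu) * w k) / mu).
  assert (Hw' : Ph w').
  { apply Hball.
    - destruct Hy as [Hy1 Hy2], (Ph_hyp w Hw) as [Hw1 Hw2]. split.
      + unfold w', Rdiv. rewrite (sumR_ext _ _ (fun k => / mu * (y k - (1 - mu) * w k)))
          by (intros; ring).
        rewrite sumR_scal, sumR_minus, sumR_scal, Hy1, Hw1. field; lra.
      + intros k Hk. unfold w'. rewrite Hy2, Hw2 by auto. unfold Rdiv; ring.
    - unfold nrmP.
      rewrite (nrmL_ext _ _ (fun k => / mu * vsub y (fun k => mu * x0 k + (1 - mu) * w k) k))
        by (intros; unfold vsub, w'; field; lra).
      rewrite nrmL_scal, Rabs_right by (left; apply Rinv_0_lt_compat; lra).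
      unfold nrmP in Hn. apply (Rmult_lt_reg_l mu); [lra|].
      rewrite <- Rmult_assoc, Rinv_r, Rmult_1_l; lra. }
  replace y with (fun k => mu * w' k + (1 - mu) * w k); [apply Hcv; auto; lra|].
  apply functional_extensionality; intros k. unfold w'. field; lra.
Qed.

Lemma ball_point_in_Ph x0 d0 s i j :
  (forall y, in_hyp N y -> nrmP N (vsub y x0) < d0 -> Ph y) -> in_hyp N x0 ->
  0 < s -> 2 * s < d0 -> (i < nP N)%nat -> (j < nP N)%nat ->
  Ph (fun k => x0 k + s * (ev i k - ev j k)).
Proof.
  intros Hball [Hx1 Hx2] Hs Hsd Hi Hj.
  assert (Hev : forall l, (l < nP N)%nat -> sumR (rng (nP N)) (ev l) = 1).
  { intros l Hl. rewrite <- (sumR_indicator (nP N) l (fun _ => 1) Hl).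
    apply sumR_ext; intros; unfold ev; ring. }
  apply Hball.
  - split.
    + rewrite sumR_plus, sumR_scal, sumR_minus, !Hev, Hx1 by auto; ring.
    + intros k Hk. rewrite Hx2 by auto. unfold ev.
      destruct (Nat.eqb_spec k i), (Nat.eqb_spec k j); try lia; ring.
  - eapply Rle_lt_trans; [apply nrmL_le_l1|].
    apply (Rle_lt_trans _ (sumR (rng (nP N)) (fun k => s * ev i k + s * ev j k))).
    + apply sumR_le; intros k _. unfold vsub, ev.
      destruct (Nat.eqb k i), (Nat.eqb k j); apply Rabs_le; lra.
    + rewrite sumR_plus, !sumR_scal, !Hev by auto; lra.
Qed.

End Perturbation.

Section Argmin.
Variables (N : Net) (Ph : (nat -> R) -> Prop) (h : (nat -> R) -> R) (c : nat -> R).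
Hypothesis Had : admissible N Ph h.

Definition phi (w : nat -> R) : R := sumR (rng (nP N)) (fun p => w p * c p) + h w.

Lemma phi_subgradient x gx y : Ph x -> has_tgrad N Ph h x gx -> Ph y ->
  phi x + dotP N (fun k => gx k + c k) (vsub y x) <= phi y.
Proof.
  intros Hx Hg Hy. pose proof (tgrad_subgradient N Ph h Had x gx y Hx Hg Hy).
  assert (dotP N c (vsub y x)
          = sumR (rng (nP N)) (fun p => y p * c p) - sumR (rng (nP N)) (fun p => x p * c p)).
  { unfold dotP. rewrite <- sumR_minus. apply sumR_ext; intros; unfold vsub; ring. }
  unfold phi; rewrite dotP_plus; lra.
Qed.

Lemma phi_inf : exists m, (forall y, Ph y -> m <= phi y) /\
  forall eps, 0 < eps -> exists y, Ph y /\ phi y < m + eps.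
Proof.
  pose proof Had as [_ [_ [_ [[x0 Hx0] [_ [g [Hg _]]]]]]].
  set (a := fun k => g x0 k + c k).
  set (A := sumR (rng (nP N)) (fun k => Rabs (a k)) * 2).
  assert (Hlow : forall y, Ph y -> phi x0 - A <= phi y).
  { intros y Hy. pose proof (phi_subgradient x0 (g x0) y (proj1 Hx0) (Hg x0 Hx0) Hy) as Hsub.
    fold a in Hsub.
    pose proof (dotP_abs_le N a (vsub y x0)) as Hdot.
    pose proof (simplex_dist_l1 N y x0 (Ph_simplex N Ph h Had y Hy)
                  (Ph_simplex N Ph h Had x0 (proj1 Hx0))).
    assert (Rabs (dotP N a (vsub y x0)) <= A).
    { eapply Rle_trans; [exact Hdot|]. apply Rmult_le_compat_l; auto.
      apply sumR_nonneg; intros; apply Rabs_pos. }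
    pose proof (Rle_abs (- dotP N a (vsub y x0))). rewrite Rabs_Ropp in *. lra. }
  set (E := fun r => exists y, Ph y /\ r = - phi y).
  destruct (completeness E) as [M [HM1 HM2]].
  - exists (- (phi x0 - A)). intros r [y [Hy ->]]. pose proof (Hlow y Hy); lra.
  - exists (- phi x0), x0. split; auto. apply Hx0.
  - exists (- M). split.
    + intros y Hy. enough (- phi y <= M) by lra. apply HM1. now exists y.
    + intros eps He. apply NNPP; intros Hn.
      enough (M <= M - eps) by lra. apply HM2. intros r [y [Hy ->]].
      destruct (Rle_dec (- phi y) (M - eps)) as [|Hgt]; auto.
      exfalso; apply Hn. exists y; split; auto; lra.
Qed.

(* A cluster point of a minimizing sequence satisfies the first-order optimality
   inequality against every point where [h] has a gradient. *)
Lemma phi_minimizing_cluster : exists m ws, Ph ws /\ (forall y, Ph y -> m <= phi y) /\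
  forall z gz, Ph z -> has_tgrad N Ph h z gz ->
    phi z + dotP N (fun k => gz k + c k) (vsub ws z) <= m.
Proof.
  destruct phi_inf as [m [Hm1 Hm2]].
  set (close := fun n y => Ph y /\ phi y < m + / INR (S n)).
  set (om := fun n => epsilon (inhabits (fun _ : nat => 0)) (close n)).
  assert (Hom : forall n, close n (om n)).
  { intros n. apply epsilon_spec, Hm2, Rinv_0_lt_compat, lt_0_INR; lia. }
  destruct (Ph_cluster_point N Ph h Had om (fun n => proj1 (Hom n)))
    as [psi [ws [Hpsi [Hws HD]]]].
  exists m, ws. repeat split; auto. intros z gz Hz Hgz.
  set (a := fun k => gz k + c k).
  set (D := fun n => sumR (rng (nP N)) (fun k => Rabs (om (psi n) k - ws k))) in *.
  apply (le_of_le_add_cv0 _ _ (fun n => / INR (S n) + sumR (rng (nP N)) (fun k => Rabs (a k)) * D n)).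
  - intros n.
    pose proof (phi_subgradient z gz (om (psi n)) Hz Hgz (proj1 (Hom (psi n)))) as Hsub.
    fold a in Hsub.
    pose proof (proj2 (Hom (psi n))).
    pose proof (inv_INR_S_le n (psi n) (strict_incr_ge psi Hpsi n)).
    assert (Hshift : dotP N a (vsub ws z) - dotP N a (vsub (om (psi n)) z)
                     = dotP N a (vsub ws (om (psi n)))).
    { unfold dotP. rewrite <- sumR_minus. apply sumR_ext; intros; unfold vsub; ring. }
    assert (dotP N a (vsub ws (om (psi n))) <= sumR (rng (nP N)) (fun k => Rabs (a k)) * D n).
    { eapply Rle_trans; [apply Rle_abs|]. eapply Rle_trans; [apply dotP_abs_le|].
      right; f_equal. apply sumR_ext; intros. unfold vsub.
      rewrite <- Rabs_Ropp; f_equal; ring. }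
    lra.
  - apply cv0_plus; [apply cv_inv_INR_S|now apply cv0_scal].
Qed.

Section Boundary.
Variables (x0 ws : nat -> R) (d0 m : R).
Hypotheses (Hx0 : Ph x0) (Hd0 : 0 < d0)
  (Hball : forall y, in_hyp N y -> nrmP N (vsub y x0) < d0 -> Ph y)
  (Hws : Ph ws) (Hm_low : forall y, Ph y -> m <= phi y)
  (Hm_opt : forall z gz, Ph z -> has_tgrad N Ph h z gz ->
     phi z + dotP N (fun k => gz k + c k) (vsub ws z) <= m).

Lemma segment_slope_nonneg mu gz : 0 < mu <= 1 ->
  has_tgrad N Ph h (fun k => mu * x0 k + (1 - mu) * ws k) gz ->
  0 <= dotP N (fun k => gz k + c k) (vsub x0 ws).
Proof.
  intros Hmu Hgz. pose proof Had as [_ [_ [Hcv _]]].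
  set (z := fun k => mu * x0 k + (1 - mu) * ws k) in *.
  assert (Hz : Ph z) by (apply Hcv; auto; lra).
  pose proof (Hm_opt z gz Hz Hgz). pose proof (Hm_low z Hz).
  assert (dotP N (fun k => gz k + c k) (vsub ws z)
          = - mu * dotP N (fun k => gz k + c k) (vsub x0 ws)).
  { unfold dotP. rewrite <- sumR_scal. apply sumR_ext; intros; unfold vsub, z; ring. }
  nra.
Qed.

(* Testing optimality against the points x0 + s (e_i - e_j) of the ball around x0
   bounds the spread, hence the size, of the gradient along the segment [x0, ws]. *)
Lemma segment_grad_bounded : exists T, forall mu gz, 0 < mu <= 1 ->
  has_tgrad N Ph h (fun k => mu * x0 k + (1 - mu) * ws k) gz ->
  forall k, (k < nP N)%nat -> Rabs (gz k) <= T.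
Proof.
  pose proof Had as [_ [_ [Hcv _]]].
  set (s := d0 / 4).
  assert (Hs : 0 < s) by (unfold s; lra).
  set (yt := fun i j k => x0 k + s * (ev i k - ev j k)).
  assert (Hyt : forall i j, (i < nP N)%nat -> (j < nP N)%nat -> Ph (yt i j)).
  { intros i j Hi Hj. apply (ball_point_in_Ph N Ph x0 d0); auto.
    - apply (Ph_hyp N Ph h Had x0 Hx0).
    - unfold s; lra. }
  set (rP := rng (nP N)).
  set (Q := sumR rP (fun i => sumR rP (fun j => Rabs (phi (yt i j))))).
  assert (HQ : forall i j, (i < nP N)%nat -> (j < nP N)%nat -> phi (yt i j) <= Q).
  { intros i j Hi Hj. eapply Rle_trans; [apply Rle_abs|].
    eapply Rle_trans; [apply (sumR_term_le rP (fun j => Rabs (phi (yt i j))) j)|].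
    - intros; apply Rabs_pos.
    - now apply in_rng.
    - apply (sumR_term_le rP (fun i => sumR rP (fun j => Rabs (phi (yt i j)))) i).
      + intros; apply sumR_nonneg; intros; apply Rabs_pos.
      + now apply in_rng. }
  set (Cc := sumR rP (fun k => Rabs (c k))).
  assert (HCc : forall k, (k < nP N)%nat -> - Cc <= c k <= Cc).
  { intros k Hk. apply Rabs_le_between, (sumR_term_le rP (fun k => Rabs (c k))).
    - intros; apply Rabs_pos.
    - now apply in_rng. }
  exists ((Q - m) / s + 2 * Cc). intros mu gz Hmu Hgz.
  set (z := fun k => mu * x0 k + (1 - mu) * ws k) in *.
  assert (Hz : Ph z) by (apply Hcv; auto; lra).
  set (a := fun k => gz k + c k).
  apply (tangent_abs_le_of_spread N gz); [apply Hgz|]. intros i j Hi Hj.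
  pose proof (phi_subgradient z gz (yt i j) Hz Hgz (Hyt i j Hi Hj)) as Hsub.
  assert (Hdir : dotP N a (vsub (yt i j) z)
                 = s * (a i - a j) + (1 - mu) * dotP N a (vsub x0 ws)).
  { rewrite <- (dotP_ev N a i j s Hi Hj). unfold dotP.
    rewrite <- sumR_scal, <- sumR_plus. apply sumR_ext; intros; unfold vsub, yt, z; ring. }
  fold a in Hsub. rewrite Hdir in Hsub.
  pose proof (segment_slope_nonneg mu gz Hmu Hgz). fold a in H.
  pose proof (Hm_low z Hz). pose proof (HQ i j Hi Hj).
  assert (Hsa : s * (a i - a j) <= Q - m).
  { assert (0 <= (1 - mu) * dotP N a (vsub x0 ws)) by (apply Rmult_le_pos; lra). lra. }
  assert (a i - a j <= (Q - m) / s) by (apply le_div_of_mul_le; auto; lra).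
  pose proof (HCc i Hi); pose proof (HCc j Hj). unfold a in *; lra.
Qed.

End Boundary.

(* Near the relative boundary the gradient of [h] blows up, which the bound along
   the segment from an interior point forbids. *)
Lemma minimizing_cluster_rel_int ws m : Ph ws -> (forall y, Ph y -> m <= phi y) ->
  (forall z gz, Ph z -> has_tgrad N Ph h z gz ->
     phi z + dotP N (fun k => gz k + c k) (vsub ws z) <= m) ->
  rel_int N Ph ws.
Proof.
  intros Hws Hm_low Hm_opt. apply NNPP; intros Hnri.
  pose proof Had as [_ [_ [_ [[x0 Hx0] [_ [g [Hg [_ Hblow]]]]]]]].
  pose proof Hx0 as [Hx0P [d0 [Hd0 Hball]]].
  destruct (segment_grad_bounded x0 ws d0 m Hx0P Hd0 Hball Hws Hm_low Hm_opt) as [T HT].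
  destruct (Hblow ws Hws Hnri (INR (nP N) * T)) as [dl [Hdl Hdl']].
  set (nx := nrmP N (vsub x0 ws)).
  destruct (small_factor_mul_lt dl nx 1 Hdl (nrmL_nonneg _ _) ltac:(lra)) as [Hmu0 Hmu].
  pose proof (Rmin_l 1 (dl / (2 * (nx + 1)))).
  set (mu := Rmin 1 (dl / (2 * (nx + 1)))) in *.
  set (z := fun k => mu * x0 k + (1 - mu) * ws k).
  assert (Hz : rel_int N Ph z) by (apply (rel_int_comb N Ph h Had); auto; lra).
  assert (Hzn : nrmP N (vsub z ws) < dl).
  { unfold z. rewrite nrmP_comb_sub, Rabs_right by lra. exact Hmu. }
  specialize (Hdl' z Hz Hzn).
  assert (Hgz : sumR (rng (nP N)) (fun k => Rabs (g z k)) <= INR (nP N) * T).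
  { rewrite <- sumR_const_rng. apply sumR_le; intros k Hk.
    apply (HT mu); [lra|apply Hg, Hz|now apply in_rng]. }
  pose proof (nrmL_le_l1 (rng (nP N)) (g z)). unfold nrmP in Hdl'. lra.
Qed.

Lemma argmin_exists : exists w, Ph w /\ forall w', Ph w' -> phi w <= phi w'.
Proof.
  pose proof Had as [_ [_ [_ [_ [_ [g [Hg _]]]]]]].
  destruct phi_minimizing_cluster as [m [ws [Hws [Hm_low Hm_opt]]]].
  assert (Hri : rel_int N Ph ws) by now apply (minimizing_cluster_rel_int ws m).
  exists ws; split; auto. intros w' Hw'.
  pose proof (Hm_opt ws (g ws) Hws (Hg ws Hri)). pose proof (Hm_low w' Hw').
  assert (dotP N (fun k => g ws k + c k) (vsub ws ws) = 0)
    by (apply sumR_zero; intros; unfold vsub; ring).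
  lra.
Qed.

End Argmin.

Section LinkFlows.
Variables (N : Net) (Ph : (nat -> R) -> Prop) (h : (nat -> R) -> R).
Hypothesis Had : admissible N Ph h.

Lemma Fh_in_Ph f : Ph (Fh N Ph h f).
Proof.
  set (c := fun p => sumR (rng (nE N)) (fun e => Ainc N e p * Tdel N e (f e))).
  destruct (argmin_exists N Ph h c Had) as [w Hw].
  apply (epsilon_spec (inhabits (fun _ : nat => 0)) (fun omega => Ph omega /\
    forall omega', Ph omega' -> cost N f omega + h omega <= cost N f omega' + h omega')).
  exists w. exact Hw.
Qed.

Lemma Ainc_01 e p : 0 <= Ainc N e p <= 1.
Proof. unfold Ainc. destruct existsb; lra. Qed.

Lemma fpi_bounds x e : in_simplex N x -> 0 <= fpi N x e <= 1.
Proof.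
  intros Hx. pose proof Hx as [Hpos [_ Hsum]]. unfold fpi. split.
  - apply sumR_nonneg. intros p Hp. apply in_rng in Hp.
    pose proof (Ainc_01 e p). pose proof (Hpos p Hp). nra.
  - rewrite <- Hsum. apply sumR_le. intros p Hp. apply in_rng in Hp.
    pose proof (Ainc_01 e p). pose proof (Hpos p Hp). nra.
Qed.

Lemma fpi_dist x y e :
  Rabs (fpi N x e - fpi N y e) <= sumR (rng (nP N)) (fun k => Rabs (x k - y k)).
Proof.
  unfold fpi. rewrite <- sumR_minus. eapply Rle_trans; [apply sumR_abs|].
  apply sumR_le. intros k _.
  replace (Ainc N e k * x k - Ainc N e k * y k) with (Ainc N e k * (x k - y k)) by ring.
  rewrite Rabs_mult. pose proof (Ainc_01 e k). rewrite (Rabs_right (Ainc N e k)) by lra.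
  pose proof (Rabs_pos (x k - y k)). nra.
Qed.

(* Ph is compact and every point of it keeps each link strictly below capacity. *)
Lemma fpi_sup_below_cap e : (e < nE N)%nat ->
  exists B, (forall w, Ph w -> fpi N w e <= B) /\ below_cap (cap N e) B.
Proof.
  intros He. pose proof Had as [HPi _].
  destruct (cap N e) as [cv|] eqn:Hc; [|exists 1; split; simpl; auto; intros; now apply fpi_bounds, HPi].
  apply NNPP. intros Hn.
  set (near_cap := fun n w => Ph w /\ cv - / INR (S n) < fpi N w e).
  assert (Hex : forall n, exists w, near_cap n w).
  { intros n. apply NNPP; intros Hn2. apply Hn. exists (cv - / INR (S n)). split.
    - intros w Hw. destruct (Rle_dec (fpi N w e) (cv - / INR (S n))) as [|Hgt]; auto.
      exfalso; apply Hn2; exists w; split; auto; lra.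
    - unfold below_cap. pose proof (Rinv_0_lt_compat (INR (S n)) ltac:(apply lt_0_INR; lia)); lra. }
  set (om := fun n => epsilon (inhabits (fun _ : nat => 0)) (near_cap n)).
  assert (Hom : forall n, near_cap n (om n)) by (intros n; apply epsilon_spec, Hex).
  destruct (Ph_cluster_point N Ph h Had om (fun n => proj1 (Hom n)))
    as [psi [ws [Hpsi [Hws HD]]]].
  assert (cv <= fpi N ws e).
  { apply (le_of_le_add_cv0 _ _ (fun n => / INR (S n)
             + sumR (rng (nP N)) (fun k => Rabs (om (psi n) k - ws k)))).
    - intros n. pose proof (proj2 (Hom (psi n))).
      pose proof (Rabs_le_between _ _ (fpi_dist (om (psi n)) ws e)).
      pose proof (inv_INR_S_le n (psi n) (strict_incr_ge psi Hpsi n)). lra.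
    - apply cv0_plus; auto. apply cv_inv_INR_S. }
  destruct (HPi ws Hws) as [_ Hb]. specialize (Hb e He). rewrite Hc in Hb. simpl in Hb. lra.
Qed.

End LinkFlows.

Definition right_cont0 (f : R -> R) : Prop :=
  forall eps, 0 < eps -> exists d, 0 < d /\ forall s, 0 <= s < d -> Rabs (f s - f 0) < eps.

Lemma continuity_right_cont0 f : continuity_pt f 0 -> right_cont0 f.
Proof.
  intros Hf eps He. destruct (Hf eps He) as [d [Hd Hd']]. exists d; split; auto.
  intros s Hs. destruct (Req_dec s 0) as [->|Hs0].
  - rewrite Rminus_diag, Rabs_R0; lra.
  - apply (Hd' s). split.
    + split; [exact I|auto].
    + simpl; unfold R_dist; rewrite Rminus_0_r, Rabs_right; lra.
Qed.

Lemma right_cont0_const a : right_cont0 (fun _ => a).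
Proof. intros eps He; exists 1; split; [lra|]; intros; rewrite Rminus_diag, Rabs_R0; auto. Qed.

Lemma right_cont0_mult f g : right_cont0 f -> right_cont0 g ->
  right_cont0 (fun s => f s * g s).
Proof.
  intros Hf Hg eps He.
  set (Kf := Rabs (f 0) + 1). set (Kg := Rabs (g 0) + 1).
  assert (HKf : 0 < Kf) by (unfold Kf; pose proof (Rabs_pos (f 0)); lra).
  assert (HKg : 0 < Kg) by (unfold Kg; pose proof (Rabs_pos (g 0)); lra).
  destruct (Hf (Rmin 1 (eps / (2 * Kg)))) as [d1 [Hd1 Hd1']].
  { apply Rmin_pos; [lra|apply Rdiv_lt_0_compat; lra]. }
  destruct (Hg (eps / (2 * Kf))) as [d2 [Hd2 Hd2']]; [apply Rdiv_lt_0_compat; lra|].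
  exists (Rmin d1 d2). split; [now apply Rmin_pos|]. intros s Hs.
  pose proof (Rmin_l d1 d2); pose proof (Rmin_r d1 d2).
  specialize (Hd1' s ltac:(lra)); specialize (Hd2' s ltac:(lra)).
  pose proof (Rmin_l 1 (eps / (2 * Kg))); pose proof (Rmin_r 1 (eps / (2 * Kg))).
  assert (Hfs : Rabs (f s) <= Kf).
  { unfold Kf. replace (f s) with (f 0 + (f s - f 0)) by ring.
    eapply Rle_trans; [apply Rabs_triang|lra]. }
  assert (Hterm1 : Rabs (f s) * Rabs (g s - g 0) < eps / 2).
  { apply (Rle_lt_trans _ (Kf * Rabs (g s - g 0))).
    - apply Rmult_le_compat_r; [apply Rabs_pos|auto].
    - replace (eps / 2) with (Kf * (eps / (2 * Kf))) by (field; lra).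
      now apply Rmult_lt_compat_l. }
  assert (Hterm2 : Rabs (g 0) * Rabs (f s - f 0) <= eps / 2).
  { replace (eps / 2) with (Kg * (eps / (2 * Kg))) by (field; lra).
    apply Rmult_le_compat; try apply Rabs_pos; unfold Kg in *; lra. }
  replace (f s * g s - f 0 * g 0) with (f s * (g s - g 0) + g 0 * (f s - f 0)) by ring.
  eapply Rle_lt_trans; [apply Rabs_triang|]. rewrite !Rabs_mult. lra.
Qed.

Lemma sumR_right_cont0 l (F : R -> nat -> R) :
  (forall k, In k l -> right_cont0 (fun s => F s k)) ->
  right_cont0 (fun s => sumR l (F s)).
Proof.
  induction l as [|a l IH]; simpl; intros HF eps Heps.
  - exists 1; split; [lra|]; intros; rewrite Rminus_diag, Rabs_R0; auto.
  - destruct (HF a (or_introl eq_refl) (eps / 2)) as [d1 [Hd1 H1]]; [lra|].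
    destruct (IH (fun k Hk => HF k (or_intror Hk)) (eps / 2)) as [d2 [Hd2 H2]]; [lra|].
    exists (Rmin d1 d2); split; [now apply Rmin_pos|]. intros s Hs.
    pose proof (Rmin_l d1 d2); pose proof (Rmin_r d1 d2).
    specialize (H1 s ltac:(lra)); specialize (H2 s ltac:(lra)).
    replace (F s a + sumR l (F s) - (F 0 a + sumR l (F 0))) with
      ((F s a - F 0 a) + (sumR l (F s) - sumR l (F 0))) by ring.
    eapply Rle_lt_trans; [apply Rabs_triang|lra].
Qed.

Lemma le_at0_of_nonincr (z : R -> R) t : 0 < t ->
  (forall e, 0 < e < t -> z t <= z e) -> right_cont0 z -> z t <= z 0.
Proof.
  intros Ht Hdec Hz. apply Rnot_lt_le; intros Hlt.
  destruct (Hz (z t - z 0) ltac:(lra)) as [d [Hd Hd']].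
  pose proof (Rmin_l t d); pose proof (Rmin_r t d).
  assert (0 < Rmin t d) by now apply Rmin_pos.
  specialize (Hd' (Rmin t d / 2) ltac:(lra)). specialize (Hdec (Rmin t d / 2) ltac:(lra)).
  apply Rabs_def2 in Hd'; lra.
Qed.

Lemma derivable_pt_lim_exp_scal (y : R -> R) B eta t l : derivable_pt_lim y t l ->
  derivable_pt_lim (fun s => exp (eta * s) * (y s - B)) t
    (eta * exp (eta * t) * (y t - B) + exp (eta * t) * l).
Proof.
  intros Hy.
  assert (Hexp : derivable_pt_lim (fun s => exp (eta * s)) t (exp (eta * t) * eta)).
  { apply (derivable_pt_lim_comp (fun s => eta * s) exp); [|apply derivable_pt_lim_exp].
    pose proof (derivable_pt_lim_scal id eta t 1 (derivable_pt_lim_id t)) as Hs.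
    now rewrite Rmult_1_r in Hs. }
  assert (Hsub : derivable_pt_lim (fun s => y s - B) t (l - 0)).
  { apply (derivable_pt_lim_minus y (fct_cte B)); auto. apply derivable_pt_lim_const. }
  replace (eta * exp (eta * t) * (y t - B) + exp (eta * t) * l)
    with (exp (eta * t) * eta * (y t - B) + exp (eta * t) * (l - 0)) by ring.
  exact (derivable_pt_lim_mult _ _ t _ _ Hexp Hsub).
Qed.

(* Solution of the relaxation equation y' = eta (u - y) with forcing u <= B:
   exp (eta s) (y s - B) is nonincreasing. *)
Lemma relaxation_bound (y u : R -> R) B eta : 0 < eta ->
  (forall t, 0 < t -> derivable_pt_lim y t (eta * (u t - y t))) ->
  (forall t, 0 < t -> u t <= B) -> right_cont0 y ->
  forall t, 0 < t -> y t <= B + exp (- (eta * t)) * (y 0 - B).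
Proof.
  intros Heta Hd Hu Hy t Ht.
  set (z := fun s => exp (eta * s) * (y s - B)).
  assert (Hdec : forall e, 0 < e < t -> z t <= z e).
  { intros e He.
    destruct (MVT_cor2 z (fun s => eta * exp (eta * s) * (u s - B)) e t ltac:(lra))
      as [c0 [Hc0 Hc1]].
    - intros c1 Hc1.
      replace (eta * exp (eta * c1) * (u c1 - B)) with
        (eta * exp (eta * c1) * (y c1 - B) + exp (eta * c1) * (eta * (u c1 - y c1))) by ring.
      apply derivable_pt_lim_exp_scal, Hd; lra.
    - pose proof (Hu c0 ltac:(lra)). pose proof (exp_pos (eta * c0)).
      assert (0 <= eta * exp (eta * c0)) by (apply Rmult_le_pos; lra).
      assert (eta * exp (eta * c0) * (u c0 - B) <= 0) by nra.
      assert (eta * exp (eta * c0) * (u c0 - B) * (t - e) <= 0) by nra.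
      lra. }
  assert (Hz0 : z t <= z 0).
  { apply le_at0_of_nonincr; auto. apply right_cont0_mult.
    - apply continuity_right_cont0. reg.
    - intros eps He. destruct (Hy eps He) as [d [Hd0 Hd']]. exists d; split; auto.
      intros s Hs. replace (y s - B - (y 0 - B)) with (y s - y 0) by ring. auto. }
  unfold z in Hz0. rewrite Rmult_0_r, exp_0, Rmult_1_l in Hz0.
  rewrite exp_Ropp. pose proof (exp_pos (eta * t)).
  replace (y t) with (B + / exp (eta * t) * (exp (eta * t) * (y t - B))) by (field; lra).
  apply Rplus_le_compat_l, Rmult_le_compat_l; [left; now apply Rinv_0_lt_compat|auto].
Qed.

Lemma relaxation_eventually_below (y u : R -> R) B tau eta : 0 < eta ->
  (forall t, 0 < t -> derivable_pt_lim y t (eta * (u t - y t))) ->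
  (forall t, 0 < t -> u t <= B) -> right_cont0 y -> y 0 <= 1 -> B < tau ->
  forall t, 0 < t -> ln ((1 + Rabs B) / (tau - B)) / eta <= t -> y t <= tau.
Proof.
  intros Heta Hd Hu Hy Hy0 HBtau t Ht Hlate.
  pose proof (relaxation_bound y u B eta Heta Hd Hu Hy t Ht) as Hbound.
  pose proof (exp_pos (- (eta * t))).
  destruct (Rle_dec (y 0 - B) 0) as [Hle|Hgt].
  { assert (exp (- (eta * t)) * (y 0 - B) <= 0) by nra. lra. }
  set (K := 1 + Rabs B) in *.
  assert (HK : y 0 - B <= K) by (unfold K; pose proof (Rle_abs (- B)); rewrite Rabs_Ropp in *; lra).
  assert (HKpos : 0 < K) by (unfold K; pose proof (Rabs_pos B); lra).
  assert (Hln : ln (K / (tau - B)) <= eta * t).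
  { apply (Rmult_le_compat_l eta) in Hlate; [|lra].
    now replace (eta * (ln (K / (tau - B)) / eta)) with (ln (K / (tau - B))) in Hlate
      by (field; lra). }
  assert (Hexp : exp (- (eta * t)) * K <= tau - B).
  { assert (exp (- (eta * t)) <= exp (- ln (K / (tau - B)))).
    { destruct (Req_dec (eta * t) (ln (K / (tau - B)))) as [->|]; [lra|].
      left; apply exp_increasing; lra. }
    rewrite (exp_Ropp (ln _)), exp_ln in H0 by (apply Rdiv_lt_0_compat; lra).
    apply (Rmult_le_compat_r K) in H0; [|lra].
    now replace (/ (K / (tau - B)) * K) with (tau - B) in H0 by (field; lra). }
  assert (exp (- (eta * t)) * (y 0 - B) <= exp (- (eta * t)) * K)
    by (apply Rmult_le_compat_l; lra).
  lra.
Qed.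

Lemma geom_sum_le a n : 0 < a < 1 -> sumR (rng n) (fun v => a ^ v) <= / (1 - a).
Proof.
  intros Ha. assert (Hsum : sumR (rng n) (fun v => a ^ v) * (1 - a) = 1 - a ^ n).
  { induction n as [|n IH]; [simpl; ring|].
    rewrite rng_S, sumR_app, Rmult_plus_distr_r, IH; simpl; ring. }
  pose proof (pow_lt a n ltac:(lra)).
  rewrite <- (Rmult_1_l (/ (1 - a))). apply le_div_of_mul_le; lra.
Qed.

Lemma sgn_abs_le x : Rabs (sgn x) <= 1.
Proof.
  unfold sgn. destruct Rlt_dec; [rewrite Rabs_R1; lra|].
  destruct Rlt_dec; [rewrite Rabs_left; lra|rewrite Rabs_R0; lra].
Qed.

Section Solution.
Variables (N : Net) (Ph : (nat -> R) -> Prop) (h : (nat -> R) -> R).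
Hypothesis Had : admissible N Ph h.

Lemma link_margins : flows_ok N ->
  exists B tau dl : nat -> R, forall e, (e < nE N)%nat ->
    (forall w, Ph w -> fpi N w e <= B e) /\ B e < tau e /\ 0 < dl e /\
    (forall y, 0 <= y -> y <= tau e -> dl e <= dmu N e (minv (mu N e) y)).
Proof.
  intros Hflows.
  set (margin := fun e (q : R * R * R) => (e < nE N)%nat ->
    (forall w, Ph w -> fpi N w e <= fst (fst q)) /\ fst (fst q) < snd (fst q) /\ 0 < snd q /\
    (forall y, 0 <= y -> y <= snd (fst q) -> snd q <= dmu N e (minv (mu N e) y))).
  destruct (choice margin) as [q Hq].
  - intros e. destruct (lt_dec e (nE N)) as [He|He]; [|exists (0, 0, 0); unfold margin; intros; lia].
    destruct (fpi_sup_below_cap N Ph h Had e He) as [B0 [HB1 HB2]].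
    assert (Htau : exists tau, B0 < tau /\ below_cap (cap N e) tau).
    { destruct (cap N e) as [cv|]; simpl in *.
      - exists ((B0 + cv) / 2); split; lra.
      - exists (B0 + 1); split; auto; lra. }
    destruct Htau as [tau [Ht1 Ht2]].
    destruct (dmu_minv_lower_bound _ _ _ (Hflows e He) tau Ht2) as [dl [Hdl Hdl']].
    exists (B0, tau, dl). unfold margin; intros _. repeat split; auto.
  - exists (fun e => fst (fst (q e))), (fun e => snd (fst (q e))), (fun e => snd (q e)).
    intros e He. exact (Hq e He).
Qed.

Lemma path_flow_eventually_below G eta pi rho e B tau : 0 < eta ->
  admissible_init N pi rho -> is_solution N G Ph h eta pi rho -> (e < nE N)%nat ->
  (forall w, Ph w -> fpi N w e <= B) -> B < tau ->
  forall t, 0 < t -> ln ((1 + Rabs B) / (tau - B)) / eta <= t -> fpi N (pi t) e <= tau.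
Proof.
  intros Heta [Hpi0 _] [_ [Hder [_ [Hcont _]]]] He HB HBtau.
  apply (relaxation_eventually_below (fun s => fpi N (pi s) e)
           (fun s => fpi N (Fh N Ph h (fvec N (rho s))) e) B tau eta); auto.
  - intros s Hs. unfold fpi.
    replace (eta * (sumR (rng (nP N)) (fun p => Ainc N e p * Fh N Ph h (fvec N (rho s)) p)
                    - sumR (rng (nP N)) (fun p => Ainc N e p * pi s p)))
      with (sumR (rng (nP N))
              (fun p => Ainc N e p * (eta * (Fh N Ph h (fvec N (rho s)) p - pi s p))))
      by (rewrite <- sumR_minus, <- sumR_scal; apply sumR_ext; intros; ring).
    apply (sumR_derivable _ (fun s p => Ainc N e p * pi s p)). intros p Hp.
    apply (derivable_pt_lim_scal (fun s => pi s p)), Hder; auto. now apply in_rng.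
  - intros s _. apply HB, Fh_in_Ph, Had.
  - apply (sumR_right_cont0 _ (fun s p => Ainc N e p * pi s p)). intros p Hp.
    apply right_cont0_mult; [apply right_cont0_const|]. intros eps; apply Hcont, in_rng, Hp.
  - apply fpi_bounds, Hpi0.
Qed.

Lemma gradW_abs_le alpha rho P tau dl : 0 < alpha < 1 -> in_simplex N P ->
  (forall e, (e < nE N)%nat -> fpi N P e <= tau e /\ 0 < dl e /\
     (forall y, 0 <= y -> y <= tau e -> dl e <= dmu N e (minv (mu N e) y))) ->
  forall p, Rabs (gradW N alpha rho P p) <= sumR (rng (nE N)) (fun e => / dl e) / (1 - alpha).
Proof.
  intros Hal HP Hlink p. set (L0 := sumR (rng (nE N)) (fun e => / dl e)).
  assert (HL0 : 0 <= L0).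
  { apply sumR_nonneg. intros e He. apply in_rng, Hlink in He.
    left; apply Rinv_0_lt_compat, He. }
  assert (Hterm : forall e, (e < nE N)%nat ->
            Rabs (sgn (rho e - rhopi N P e) * Ainc N e p / dmu N e (rhopi N P e)) <= / dl e).
  { intros e He. destruct (Hlink e He) as [Hfl [Hdl Hdl']].
    pose proof (fpi_bounds N P e HP).
    specialize (Hdl' (fpi N P e) ltac:(lra) Hfl). fold (rhopi N P e) in Hdl'.
    pose proof (sgn_abs_le (rho e - rhopi N P e)). pose proof (Ainc_01 N e p).
    pose proof (Rinv_le_contravar _ _ Hdl Hdl').
    assert (Hinv : 0 < / dmu N e (rhopi N P e)) by (apply Rinv_0_lt_compat; lra).
    unfold Rdiv. rewrite !Rabs_mult, (Rabs_right (Ainc N e p)), (Rabs_right (/ _)) by lra.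
    pose proof (Rabs_pos (sgn (rho e - rhopi N P e))).
    assert (Rabs (sgn (rho e - rhopi N P e)) * Ainc N e p <= 1) by nra. nra. }
  unfold gradW. rewrite Rabs_Ropp. eapply Rle_trans; [apply sumR_abs|].
  apply (Rle_trans _ (sumR (rng (nn N)) (fun v => alpha ^ v * L0))).
  - apply sumR_le. intros v _. pose proof (pow_lt alpha v ltac:(lra)).
    rewrite Rabs_mult, Rabs_right by lra. apply Rmult_le_compat_l; [lra|].
    eapply Rle_trans; [apply sumR_abs|].
    unfold outE. eapply Rle_trans; [|apply (sumR_filter_le (fun e => Nat.eqb (Defs.tl N e) v))].
    + apply sumR_le. intros e He. apply filter_In in He as [He _]. apply in_rng in He.
      now apply Hterm.
    + intros e He. apply in_rng, Hlink in He. left; apply Rinv_0_lt_compat, He.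
  - rewrite (sumR_ext _ _ (fun v => L0 * alpha ^ v)) by (intros; ring).
    rewrite sumR_scal. unfold Rdiv. apply Rmult_le_compat_l; auto. now apply geom_sum_le.
Qed.

End Solution.

Lemma dotP_Phi_tangent N g d : sumR (rng (nP N)) d = 0 -> dotP N (Phi N g) d = dotP N g d.
Proof.
  intros Hd. unfold dotP, Phi.
  rewrite (sumR_ext _ _ (fun k => g k * d k - / INR (nP N) * sumR (rng (nP N)) g * d k))
    by (intros; ring).
  rewrite sumR_minus, sumR_scal, Hd; ring.
Qed.

Lemma dotP_simplex_diff_le N g K F P : (forall p, Rabs (g p) <= K) ->
  in_simplex N F -> in_simplex N P -> dotP N g (vsub F P) <= 2 * K.
Proof.
  intros Hg HF HP. assert (HK : 0 <= K) by (pose proof (Hg 0%nat); pose proof (Rabs_pos (g 0%nat)); lra).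
  eapply Rle_trans; [apply Rle_abs|]. eapply Rle_trans; [apply sumR_abs|].
  apply (Rle_trans _ (K * sumR (rng (nP N)) (fun k => Rabs (F k - P k)))).
  - rewrite <- sumR_scal. apply sumR_le; intros k _. rewrite Rabs_mult.
    apply Rmult_le_compat_r; [apply Rabs_pos|apply Hg].
  - pose proof (simplex_dist_l1 N F P HF HP). nra.
Qed.

Theorem lemma6 (N : Net) (Ph : (nat -> R) -> Prop) (h : (nat -> R) -> R) :
  net_ok N -> flows_ok N -> mincut_gt1 N -> paths_ok N -> admissible N Ph h ->
  exists l, 0 < l /\
  forall (G : nat -> (nat -> R) -> (nat -> R) -> (nat -> R)) (alpha : R),
    G_ok N G -> 0 < alpha < 1 ->
    forall eta, 0 < eta ->
    exists t0, 0 <= t0 /\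
    forall pi rho : R -> (nat -> R),
      admissible_init N pi rho -> is_solution N G Ph h eta pi rho ->
      forall t, t0 <= t ->
        dotP N (Phi N (gradW N alpha (rho t) (pi t)))
               (vsub (Fh N Ph h (fvec N (rho t))) (pi t))
        <= 2 * l / (1 - alpha).
Proof.
  intros _ Hflows _ _ Had.
  destruct (link_margins N Ph h Had Hflows) as [B [tau [dl Hlink]]].
  set (L0 := sumR (rng (nE N)) (fun e => / dl e)).
  assert (HL0 : 0 <= L0).
  { apply sumR_nonneg. intros e He. apply in_rng, Hlink in He.
    left; apply Rinv_0_lt_compat, He. }
  exists (L0 + 1). split; [lra|]. intros G alpha _ Hal eta Heta.
  set (late := fun e => Rmax 0 (ln ((1 + Rabs (B e)) / (tau e - B e)) / eta)).
  assert (Hlate : 0 <= sumR (rng (nE N)) late)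
    by (apply sumR_nonneg; intros; apply Rmax_l).
  exists (sumR (rng (nE N)) late + 1). split; [lra|].
  intros pi rho Hinit Hsol t Ht.
  assert (HF : in_simplex N (Fh N Ph h (fvec N (rho t))))
    by apply (Ph_simplex N Ph h Had), (Fh_in_Ph N Ph h Had).
  assert (HP : in_simplex N (pi t)) by (apply (proj1 Hsol); lra).
  assert (Hflow : forall e, (e < nE N)%nat -> fpi N (pi t) e <= tau e).
  { intros e He. destruct (Hlink e He) as [HB [HBtau _]].
    apply (path_flow_eventually_below N Ph h Had G eta pi rho e (B e)); auto; [lra|].
    apply (Rle_trans _ (late e)); [apply Rmax_r|].
    pose proof (sumR_term_le (rng (nE N)) late e (fun j _ => Rmax_l _ _)
                  (proj2 (in_rng e _) He)). lra. }
  rewrite dotP_Phi_tangent.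
  2: { unfold vsub. rewrite sumR_minus. destruct HF as [_ [_ ->]], HP as [_ [_ ->]]; ring. }
  eapply Rle_trans.
  { apply (dotP_simplex_diff_le N _ (L0 / (1 - alpha))); auto.
    apply (gradW_abs_le N alpha _ _ tau dl Hal HP).
    intros e He. pose proof (Hlink e He) as [_ [_ Hdl]]. split; auto. }
  unfold Rdiv. rewrite <- Rmult_assoc. apply Rmult_le_compat_r; [|lra].
  left; apply Rinv_0_lt_compat; lra.
Qed.
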